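(* Let $S$ be a vector space over a field $\Bbbk$ and let $\nu:S\setminus\{0\}\to C$ and $\nu':S\setminus\{0\}\to C'$ be well-ordered injective valuations. Put $C_\nu=\nu(S\setminus\{0\})$, $C_{\nu'}=\nu'(S\setminus\{0\})$ and define $$\mathbf K_{\nu',\nu}(a)=\min\{\nu'(x): x\in S\setminus\{0\},\ \nu(x)=a\}\quad (a\in C_\nu),$$ and symmetrically $\mathbf K_{\nu,\nu'}:C_{\nu'}\to C_\nu$. Then $\mathbf K_{\nu',\nu}:C_\nu\to C_{\nu'}$ and $\mathbf K_{\nu,\nu'}:C_{\nu'}\to C_\nu$ are well-defined and mutually inverse bijections. Moreover, there exists a basis $\mathbf B$ of $S$ adapted to both $\nu$ and $\nu'$ such that $\mathbf K_{\nu',\nu}(\nu(b))=\nu'(b)$ for all $b\in\mathbf B$.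
   Context: A valuation on a $\Bbbk$-vector space $S$ with values in a totally ordered set $(C,\le)$ is a map $\nu:S\setminus\{0\}\to C$ such that $\nu(cx)=\nu(x)$ for all $c\in\Bbbk^\times$, $x\ne0$, and $\nu(x+y)\le\max(\nu(x),\nu(y))$ whenever $x,y,x+y\neq 0$. It is well-ordered if its image $\nu(S\setminus\{0\})$ is a well-ordered subset of $C$. It is injective if there is a basis $\mathbf B$ of $S$ such that $\nu|_{\mathbf B}$ is injective; such a basis is called adapted to $\nu$ (then $\nu|_{\mathbf B}$ is a bijection onto $\nu(S\setminus\{0\})$ and $\nu(x)$ is the maximum of $\nu(b)$ over the $b$ occurring in the expansion of $x$). *)

From HB Require Import structures.
From mathcomp Require Import all_boot all_order all_algebra.
Set Implicit Arguments. Unset Strict Implicit. Unset Printing Implicit Defensive.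
Import Order.TTheory GRing.Theory.
Local Open Scope ring_scope.

(* Valuations on a k-vector space S with values in a totally ordered type C.
   The map nu is total on S; its value at 0 is irrelevant (never used). *)

Section Valuations.
Variables (k : fieldType) (S : lmodType k).

Definition is_valuation (d : Order.disp_t) (C : orderType d) (nu : S -> C) : Prop :=
  (forall (c : k) (x : S), c != 0 -> x != 0 -> nu (c *: x) = nu x) /\
  (forall x y : S, x != 0 -> y != 0 -> x + y != 0 ->
     (nu (x + y) <= Order.max (nu x) (nu y))%O).

Definition val_image (d : Order.disp_t) (C : orderType d) (nu : S -> C) (a : C) : Prop :=
  exists2 x : S, x != 0 & nu x = a.

Definition well_ordered_set (d : Order.disp_t) (C : orderType d) (A : C -> Prop) : Prop :=
  forall P : C -> Prop, (forall a, P a -> A a) -> (exists a, P a) ->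
    exists2 m, P m & forall a, P a -> (m <= a)%O.

Definition well_ordered_valuation (d : Order.disp_t) (C : orderType d) (nu : S -> C) :=
  is_valuation nu /\ well_ordered_set (val_image nu).

(* Bases of S (possibly infinite-dimensional), as subsets B of S. *)
Definition lin_indep (B : S -> Prop) : Prop :=
  forall (n : nat) (b : 'I_n -> S) (c : 'I_n -> k),
    injective b -> (forall i, B (b i)) ->
    \sum_(i < n) c i *: b i = 0 -> forall i, c i = 0.

Definition spans (B : S -> Prop) : Prop :=
  forall x : S, exists n (b : 'I_n -> S) (c : 'I_n -> k),
    (forall i, B (b i)) /\ x = \sum_(i < n) c i *: b i.

Definition is_basis (B : S -> Prop) : Prop := lin_indep B /\ spans B.

Definition adapted_basis (d : Order.disp_t) (C : orderType d) (nu : S -> C)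
    (B : S -> Prop) : Prop :=
  is_basis B /\ (forall b1 b2, B b1 -> B b2 -> nu b1 = nu b2 -> b1 = b2).

Definition injective_valuation (d : Order.disp_t) (C : orderType d) (nu : S -> C) :=
  is_valuation nu /\ exists B, adapted_basis nu B.

(* K_{nu',nu}(a) = c  means: c = min { nu'(x) : x <> 0, nu(x) = a }. *)
Definition K_is (d : Order.disp_t) (C : orderType d) (d' : Order.disp_t)
    (C' : orderType d') (nu' : S -> C') (nu : S -> C) (a : C) (c : C') : Prop :=
  (exists2 x : S, x != 0 & nu x = a /\ nu' x = c) /\
  (forall x : S, x != 0 -> nu x = a -> (c <= nu' x)%O).

End Valuations.

From mathcomp Require Import all_boot all_order all_algebra.
From Stdlib Require Import Classical ClassicalEpsilon.
Set Implicit Arguments. Unset Strict Implicit. Unset Printing Implicit Defensive.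
Import Order.TTheory GRing.Theory.
Local Open Scope ring_scope.

(* An injective valuation has one-dimensional graded pieces: two vectors of the
   same value differ, up to a scalar, by a vector of smaller value (compare the
   leading terms in an adapted basis).  If [x] realizes the minimum defining
   [K_{nu',nu}(a) = c] and some [y] had [nu' y = c] but [nu y < a], then
   [x - m y] would still have [nu]-value [a] and a smaller [nu']-value; hence
   [K_{nu,nu'}(c) = a].  Choosing one minimizer [x_a] for each [a] in [C_nu]
   gives a set on which both valuations are injective; it is free because [nu]
   separates its elements, and it spans because, the values being well ordered,
   any vector can be reduced by descending induction on its [nu]-value. *)

Lemma well_ordered_ind (d : Order.disp_t) (C : orderType d) (A : C -> Prop) :
  well_ordered_set A -> forall P : C -> Prop,
  (forall a, A a -> (forall b, A b -> (b < a)%O -> P b) -> P a) ->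
  forall a, A a -> P a.
Proof.
move=> woA P IH a Aa; apply: NNPP => nPa.
have [m [Am nPm] min_m] := woA (fun a => A a /\ ~ P a) (fun _ => @proj1 _ _)
  (ex_intro _ a (conj Aa nPa)).
apply/nPm/IH => // b Ab ltbm; apply: NNPP => nPb.
by have := min_m b (conj Ab nPb); rewrite leNgt ltbm.
Qed.

Section Valuation.
Variables (k : fieldType) (S : lmodType k) (d : Order.disp_t) (C : orderType d).
Variable nu : S -> C.
Hypothesis nu_val : is_valuation nu.

Definition below (t : C) (z : S) := z = 0 \/ (nu z < t)%O.

Lemma valZ c x : c != 0 -> x != 0 -> nu (c *: x) = nu x.
Proof. by case: nu_val => H _; apply: H. Qed.

Lemma valN x : x != 0 -> nu (- x) = nu x.
Proof. by move=> x0; rewrite -scaleN1r valZ // oppr_eq0 oner_eq0. Qed.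

Lemma valD x y : x != 0 -> y != 0 -> x + y != 0 ->
  (nu (x + y) <= Order.max (nu x) (nu y))%O.
Proof. by case: nu_val => _ H; apply: H. Qed.

Lemma below0 t : below t 0. Proof. by left. Qed.

Lemma belowD t x y : below t x -> below t y -> below t (x + y).
Proof.
case=> [->|ltx]; first by rewrite add0r.
case=> [->|lty]; first by rewrite addr0; right.
have [x0|x0] := eqVneq x 0; first by rewrite x0 add0r; right.
have [y0|y0] := eqVneq y 0; first by rewrite y0 addr0; right.
have [->|xy0] := eqVneq (x + y) 0; first by left.
by right; apply: le_lt_trans (valD x0 y0 xy0) _; rewrite gt_max ltx.
Qed.

Lemma belowZ t c x : below t x -> below t (c *: x).
Proof.
case=> [->|ltx]; first by rewrite scaler0; left.
have [->|c0] := eqVneq c 0; first by rewrite scale0r; left.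
have [x0|x0] := eqVneq x 0; first by rewrite x0 scaler0; left.
by right; rewrite valZ.
Qed.

Lemma belowN t x : below t x -> below t (- x).
Proof. by move/(belowZ (-1)); rewrite scaleN1r. Qed.

Lemma belowB t x y : below t x -> below t y -> below t (x - y).
Proof. by move=> bx /belowN; apply: belowD. Qed.

Lemma below_sum t (I : Type) (r : seq I) (P : pred I) (F : I -> S) :
  (forall i, P i -> below t (F i)) -> below t (\sum_(i <- r | P i) F i).
Proof. by move=> bF; apply: big_ind => //; [apply: below0 | apply: belowD]. Qed.

Lemma val_addr_below x w : x != 0 -> below (nu x) w ->
  x + w != 0 /\ nu (x + w) = nu x.
Proof.
move=> x0 [->|ltw]; first by rewrite addr0.
have [w0|w0] := eqVneq w 0; first by rewrite w0 addr0.
have xw0 : x + w != 0.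
  by apply: contraTneq ltw => /eqP; rewrite addr_eq0 => /eqP->; rewrite valN // ltxx.
split=> //; apply: le_anti; apply/andP; split.
  by apply: le_trans (valD x0 w0 xw0) _; rewrite ge_max lexx ltW.
have := @valD (x + w) (- w) xw0; rewrite oppr_eq0 addrK valN // => /(_ w0 x0).
by rewrite le_max => /orP[] // lexw; move: ltw; rewrite ltNge lexw.
Qed.

Definition gr_dim1 := forall x y, x != 0 -> y != 0 -> nu x = nu y ->
  exists m, below (nu x) (x - m *: y).

Section AdaptedSet.
Variable B : S -> Prop.
Hypothesis nu_injB : forall b1 b2, B b1 -> B b2 -> nu b1 = nu b2 -> b1 = b2.

Lemma dominant_term (I : finType) (P : pred I) (b : I -> S) (c : I -> k) :
  (forall i, B (b i)) -> (exists i, P i && (c i *: b i != 0)) ->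
  exists i, [/\ P i, c i *: b i != 0 &
    below (nu (b i)) (\sum_(j | P j && (b j != b i)) c j *: b j)].
Proof.
move=> Bb [i0 Pi0].
case: (@arg_maxP _ _ _ i0 [pred i | P i && (c i *: b i != 0)] (fun i => nu (b i)) Pi0) => i /andP[Pi nzi] max_i.
exists i; split=> //; apply: below_sum => j /andP[Pj bji].
have [->|nzj] := eqVneq (c j *: b j) 0; first exact: below0.
move: (nzj); rewrite scaler_eq0 negb_or => /andP[cj0 bj0].
right; rewrite valZ // lt_neqAle; apply/andP; split; last by apply: max_i; rewrite /= Pj.
by apply: contra bji => /eqP/nu_injB ->.
Qed.

Lemma lin_indep_of_val_inj : (forall b, B b -> b != 0) -> lin_indep B.
Proof.
move=> Bnz n b c b_inj Bb sum0 i; apply/eqP/negPn/negP => ci0.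
have nzi : predT i && (c i *: b i != 0) by rewrite /= scaler_eq0 negb_or ci0 Bnz.
have [j [_ nzj low]] := dominant_term Bb (ex_intro _ i nzi).
move: (nzj); rewrite scaler_eq0 negb_or => /andP[cj0 _].
rewrite -(valZ cj0) ?Bnz // in low.
rewrite (bigD1 j) //= in sum0.
have [] := val_addr_below nzj low.
rewrite (eq_bigl (fun l => l != j)) ?sum0 ?eqxx // => l.
by rewrite /= inj_eq.
Qed.

Definition has_leading_term x := exists b0 l,
  [/\ B b0, l != 0, nu b0 = nu x & below (nu x) (x - l *: b0)].

Lemma sum_leading_term n (b : 'I_n -> S) (c : 'I_n -> k) (A : {set 'I_n}) :
  (forall i, B (b i)) ->
  \sum_(i in A) c i *: b i = 0 \/ has_leading_term (\sum_(i in A) c i *: b i).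
Proof.
move=> Bb; elim: {A}_.+1 {-2}A (ltnSn #|A|) => // N IH A leAN.
have [/existsP[i0 Pi0]|/existsPn all0] :=
  boolP [exists i, (i \in A) && (c i *: b i != 0)]; last first.
  by left; apply: big1 => i iA; move: (all0 i); rewrite iA negbK => /eqP.
have [i [iA nzi low]] := dominant_term (P := mem A) Bb (ex_intro _ i0 Pi0).
move: (nzi); rewrite scaler_eq0 negb_or => /andP[_ bi0].
set l := \sum_(j in A | b j == b i) c j.
set r := \sum_(j | _ && _) _ in low.
have -> : \sum_(j in A) c j *: b j = l *: b i + r.
  rewrite (bigID (fun j => b j == b i)) /= scaler_suml; congr (_ + _).
  by apply: eq_bigr => j /andP[_ /eqP->].
have [l0|l0] := eqVneq l 0; last first.
  have nzl : l *: b i != 0 by rewrite scaler_eq0 negb_or l0.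
  have lowl : below (nu (l *: b i)) r by rewrite valZ.
  have [_ nux] := val_addr_below nzl lowl.
  right; exists (b i), l; rewrite nux valZ // [l *: _ + r]addrC addrK.
  by split.
have -> : l *: b i + r = \sum_(j in [set j in A | b j != b i]) c j *: b j.
  by rewrite l0 scale0r add0r; apply: eq_bigl => j; rewrite inE.
apply: IH; rewrite -ltnS (leq_trans _ leAN) // ltnS proper_card //.
apply/properP; split; last by exists i; rewrite // inE eqxx andbF.
by apply/subsetP => j; rewrite inE => /andP[].
Qed.

Lemma spans_leading_term : spans B -> forall x, x != 0 -> has_leading_term x.
Proof.
move=> spB x x0; have [n [b [c [Bb ex]]]] := spB x.
have ex' : x = \sum_(i in [set: 'I_n]) c i *: b i.
  by rewrite ex; apply: eq_bigl => i; rewrite in_setT.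
rewrite ex'; case: (sum_leading_term c [set: 'I_n] Bb) => // sum0.
by rewrite -ex' in sum0; rewrite sum0 eqxx in x0.
Qed.

Lemma gr_dim1_of_adapted : spans B -> gr_dim1.
Proof.
move=> spB x y x0 y0 nuxy.
have [bx [lx [Bbx lx0 nubx lowx]]] := spans_leading_term spB x0.
have [b' [ly [Bb' ly0 nub' lowy]]] := spans_leading_term spB y0.
have eb : b' = bx by apply: nu_injB; rewrite // nubx nub' nuxy.
exists (lx / ly).
have -> : x - lx / ly *: y = (x - lx *: bx) - (lx / ly) *: (y - ly *: bx).
  by rewrite scalerBr scalerA divfK // opprB addrA addrNK.
by apply: belowB => //; apply: belowZ; rewrite nuxy -eb.
Qed.
End AdaptedSet.
End Valuation.

Lemma injective_valuation_gr_dim1 (k : fieldType) (S : lmodType k)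
    (d : Order.disp_t) (C : orderType d) (nu : S -> C) :
  injective_valuation nu -> gr_dim1 nu.
Proof. by case=> nu_val [B [[_ spB] nu_injB]]; apply: gr_dim1_of_adapted spB. Qed.

Section SpanByValues.
Variables (k : fieldType) (S : lmodType k).

Definition seq_span (B : S -> Prop) (x : S) := exists s : seq (k * S),
  (forall p, p \in s -> B p.2) /\ x = \sum_(p <- s) p.1 *: p.2.

Lemma seq_span0 B : seq_span B 0.
Proof. by exists [::]; rewrite big_nil. Qed.

Lemma seq_spanDZ B x m b : B b -> seq_span B x -> seq_span B (x + m *: b).
Proof.
move=> Bb [s [sB ->]]; exists ((m, b) :: s); rewrite big_cons addrC.
by split=> // p; rewrite inE => /orP[/eqP->|/sB].
Qed.

Lemma spans_of_seq_span B : (forall x, seq_span B x) -> spans B.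
Proof.
move=> spB x; have [s [sB ->]] := spB x.
exists (size s), (fun i => (nth (0, 0) s i).2), (fun i => (nth (0, 0) s i).1).
by split=> [i|]; [apply/sB/mem_nth | rewrite (big_nth (0, 0)) big_mkord].
Qed.

Lemma spans_of_val_image (d : Order.disp_t) (C : orderType d) (nu : S -> C)
    (B : S -> Prop) :
  well_ordered_set (val_image nu) -> gr_dim1 nu ->
  (forall a, val_image nu a -> exists2 b, B b & b != 0 /\ nu b = a) ->
  spans B.
Proof.
move=> wo g1 hitB; apply: spans_of_seq_span => x.
have [->|x0] := eqVneq x 0; first exact: seq_span0.
suff: forall a, val_image nu a -> forall y, y != 0 -> nu y = a -> seq_span B y.
  by apply=> //; exists x.
apply: (well_ordered_ind wo) => a _ IH y y0 nuy.
have [b Bb [b0 nub]] := hitB a (ex_intro2 _ _ y y0 nuy).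
have [m low] := g1 _ _ y0 b0 (etrans nuy (esym nub)).
rewrite -(subrK (m *: b) y); apply: seq_spanDZ => //.
have [->|r0] := eqVneq (y - m *: b) 0; first exact: seq_span0.
case: low => [r0'|ltr]; first by rewrite r0' eqxx in r0.
have vr : val_image nu (nu (y - m *: b)) by exists (y - m *: b).
by apply: (IH _ vr) r0 erefl; rewrite -nuy.
Qed.
End SpanByValues.

Section Comparison.
Variables (k : fieldType) (S : lmodType k).
Variables (d : Order.disp_t) (C : orderType d) (d' : Order.disp_t) (C' : orderType d').
Variables (nu : S -> C) (nu' : S -> C').

Lemma K_exists : well_ordered_set (val_image nu') ->
  forall a, val_image nu a -> exists c, K_is nu' nu a c.
Proof.
move=> wo' a [x x0 nux].
pose P c := exists2 y : S, y != 0 & nu y = a /\ nu' y = c.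
have P_img c : P c -> val_image nu' c by case=> y y0 [_ <-]; exists y.
have [c [y y0 [nuy nu'y]] min_c] := wo' P P_img (ex_intro _ (nu' x) (ex_intro2 _ _ x x0 (conj nux erefl))).
exists c; split; first by exists y.
by move=> z z0 nuz; apply: min_c; exists z.
Qed.

Lemma K_unique a c1 c2 : K_is nu' nu a c1 -> K_is nu' nu a c2 -> c1 = c2.
Proof.
move=> [[x1 x10 [nux1 <-]] min1] [[x2 x20 [nux2 <-]] min2].
by apply: le_anti; rewrite min1 ?min2.
Qed.

Lemma K_inv : is_valuation nu -> gr_dim1 nu' ->
  forall a c, K_is nu' nu a c -> K_is nu nu' c a.
Proof.
move=> nu_val g1' a c [[x x0 [nux nu'x]] min_x]; split; first by exists x.
move=> y y0 nu'y; rewrite leNgt; apply/negP => ltya.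
have [m low'] := g1' _ _ x0 y0 (etrans nu'x (esym nu'y)).
have lowy : below nu (nu x) (- (m *: y)).
  by apply/(belowN nu_val)/(belowZ nu_val); right; rewrite nux.
have [xy0 nuxy] := val_addr_below nu_val x0 lowy.
case: low' => [xy0'|ltxy]; first by rewrite xy0' eqxx in xy0.
by have := min_x _ xy0 (etrans nuxy nux); rewrite -nu'x leNgt ltxy.
Qed.

End Comparison.

Section CommonBasis.
Variables (k : fieldType) (S : lmodType k).
Variables (d : Order.disp_t) (C : orderType d) (d' : Order.disp_t) (C' : orderType d').
Variables (nu : S -> C) (nu' : S -> C').

Lemma common_adapted_basis :
  is_valuation nu -> well_ordered_set (val_image nu) -> gr_dim1 nu ->
  well_ordered_set (val_image nu') -> gr_dim1 nu' ->
  exists B : S -> Prop, [/\ adapted_basis nu B, adapted_basis nu' B &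
    forall b, B b -> K_is nu' nu (nu b) (nu' b)].
Proof.
move=> nu_val wo g1 wo' g1'.
pose P a x := [/\ x != 0, nu x = a & K_is nu' nu a (nu' x)].
pose g a := epsilon (inhabits 0) (P a).
have gP a : val_image nu a -> P a (g a).
  move=> va; apply: epsilon_spec.
  have [c [[x x0 [nux nu'x]] min_c]] := K_exists wo' va.
  by exists x; split; rewrite // nu'x; split=> //; exists x.
pose B b := exists2 a, val_image nu a & b = g a.
have Bnz b : B b -> b != 0 by case=> a /gP[] ? _ _ ->.
have BK b : B b -> K_is nu' nu (nu b) (nu' b) by case=> a /gP[_ nua ?] ->; rewrite nua.
have injB b1 b2 : B b1 -> B b2 -> nu b1 = nu b2 -> b1 = b2.
  by case=> a1 /gP[_ nu1 _] -> [a2 /gP[_ nu2 _] ->]; rewrite nu1 nu2 => ->.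
have injB' b1 b2 : B b1 -> B b2 -> nu' b1 = nu' b2 -> b1 = b2.
  move=> B1 B2 e; apply: injB => //.
  have := K_inv nu_val g1' (BK _ B2); rewrite -e.
  exact: K_unique (K_inv nu_val g1' (BK _ B1)).
have basisB : is_basis B.
  split; first exact: (lin_indep_of_val_inj nu_val (B := B) injB Bnz).
  apply: spans_of_val_image wo g1 _ => a va.
  by exists (g a); [exists a | case: (gP a va)].
by exists B.
Qed.
End CommonBasis.

Theorem mainTheorem1 (k : fieldType) (S : lmodType k)
    (d : Order.disp_t) (C : orderType d) (d' : Order.disp_t) (C' : orderType d')
    (nu : S -> C) (nu' : S -> C') :
  well_ordered_valuation nu -> injective_valuation nu ->
  well_ordered_valuation nu' -> injective_valuation nu' ->
  (forall a, val_image nu a -> exists c, K_is nu' nu a c) /\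
  (forall c, val_image nu' c -> exists a, K_is nu nu' c a) /\
  (forall a c, val_image nu a -> K_is nu' nu a c -> K_is nu nu' c a) /\
  (forall c a, val_image nu' c -> K_is nu nu' c a -> K_is nu' nu a c) /\
  (exists B : S -> Prop, adapted_basis nu B /\ adapted_basis nu' B /\
     forall b, B b -> K_is nu' nu (nu b) (nu' b)).
Proof.
move=> [nu_val wo] /injective_valuation_gr_dim1 g1 [nu'_val wo'].
move=> /injective_valuation_gr_dim1 g1'.
split; first exact: K_exists.
split; first exact: K_exists.
split; first by move=> a c _; apply: K_inv.
split; first by move=> c a _; apply: K_inv.
by have [B [adB adB' BK]] := common_adapted_basis nu_val wo g1 wo' g1'; exists B.
Qed.
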